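(* Consider $n$ users with features $x_1,\dots,x_n\in\mathbb{R}^\ell$, nonnegative embedding weights $\widetilde{w}_{ji}\ge 0$, and any linear graph-based classifier $h=h_{\theta,b}$. If users update via the myopic best-response dynamics described below, then for every user $i\in[n]$ there is at most one round $t\ge 1$ with $x_i^{(t)}\neq x_i^{(t-1)}$.
   Context: Embeddings: $\phi(x_i;x_{-i})=\widetilde{w}_{ii}x_i+\sum_{j\neq i}\widetilde{w}_{ji}x_j$, where $x_{-i}=\{x_j\}_{j\ne i}$. Classifier: $h_{\theta,b}(x_i;x_{-i})=\mathrm{sign}(\theta^\top\phi(x_i;x_{-i})+b)\in\{\pm1\}$ with $\theta\in\mathbb{R}^\ell$, $b\in\mathbb{R}$, and $\mathrm{sign}(0)=+1$. Cost: $c(x,x')=\|x-x'\|_2$. Myopic best-response dynamics: $x_i^{(0)}=x_i$; at each round $t$ all users update concurrently by $x_i^{(t+1)}=\Delta_h(x_i^{(t)};x_{-i}^{(t)},\kappa_i^{(t)})$, where $\Delta_h(x_i;x_{-i},\kappa)=\arg\max_{x'\in\mathbb{R}^\ell} h(x';x_{-i})-c(x_i,x')-\kappa$ and $\kappa_i^{(t)}$ are accumulated costs ($\kappa_i^{(0)}=0$, $\kappa_i^{(t)}=\kappa_i^{(t-1)}+c(x_i^{(t-1)},x_i^{(t)})$). Concretely, user $i$ changes her features in a round only if she is currently classified $-1$ (given the others' current features) and there is a point $x'$ with $h(x';x_{-i})=+1$ and $c(x_i,x')\le 2$; in that case she moves to the minimum-cost such point (whose embedding lies exactly on the decision boundary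 $\theta^\top\phi+b=0$); otherwise she stays. *)

From HB Require Import structures.
From mathcomp Require Import all_boot all_order all_algebra.
From mathcomp Require Import reals.
Set Implicit Arguments. Unset Strict Implicit. Unset Printing Implicit Defensive.
Import Order.TTheory GRing.Theory Num.Theory.
Local Open Scope ring_scope.

Section Defs.
Variables (R : realType) (n l : nat).

Definition dotp (u v : 'rV[R]_l) : R := \sum_(k < l) u 0 k * v 0 k.

Definition cost (u v : 'rV[R]_l) : R := Num.sqrt (\sum_(k < l) (u 0 k - v 0 k) ^+ 2).

(* Embedding phi(x_i; x_{-i}) = w_ii x_i + sum_{j <> i} w_ji x_j ;
   w j i stands for \widetilde{w}_{ji}. *)
Definition embed (w : 'I_n -> 'I_n -> R) (X : 'I_n -> 'rV[R]_l) (i : 'I_n)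
  : 'rV[R]_l :=
  w i i *: X i + \sum_(j < n | j != i) w j i *: X j.

Definition h (theta : 'rV[R]_l) (b : R) (w : 'I_n -> 'I_n -> R)
  (X : 'I_n -> 'rV[R]_l) (i : 'I_n) : R :=
  if 0 <= dotp theta (embed w X i) + b then 1 else -1.

Definition upd (X : 'I_n -> 'rV[R]_l) (i : 'I_n) (x' : 'rV[R]_l) : 'I_n -> 'rV[R]_l :=
  fun j => if j == i then x' else X j.

(* One round of the myopic best-response dynamics (all users update
   concurrently, given the others' current features):
   user i moves iff she is currently classified -1 and some x' with
   h(x'; x_{-i}) = +1 has c(x_i, x') <= 2; she then moves to a minimum-cost
   such point; otherwise she stays. *)
Definition br_step (theta : 'rV[R]_l) (b : R) (w : 'I_n -> 'I_n -> R)
  (X X' : 'I_n -> 'rV[R]_l) : Prop :=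
  forall i : 'I_n,
    let can_move := h theta b w X i = -1 /\
      exists x', h theta b w (upd X i x') i = 1 /\ cost (X i) x' <= 2 in
    (can_move ->
       h theta b w (upd X i (X' i)) i = 1 /\ cost (X i) (X' i) <= 2 /\
       (forall x', h theta b w (upd X i x') i = 1 -> cost (X i) x' <= 2 ->
                   cost (X i) (X' i) <= cost (X i) x')) /\
    (~ can_move -> X' i = X i).

End Defs.

From HB Require Import structures.
From mathcomp Require Import all_boot all_order all_algebra.
From mathcomp Require Import reals.
From mathcomp Require Import lra.
From Stdlib Require Import Classical.
Import Order.TTheory Order.NatMonotonyTheory GRing.Theory Num.Theory.
Set Implicit Arguments. Unset Strict Implicit.
Local Open Scope ring_scope.

(* Write s_i = theta^T phi_i + b for the score of user i, so that
   h = +1 iff s_i >= 0, and p_j = theta^T x_j.  A user only moves when her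
   score goes from negative to nonnegative by changing her own p_i alone;
   since w_ii >= 0 this forces p_i to increase.  Hence every p_j is
   nondecreasing in time, and since all weights are nonnegative so is every
   score.  After user i moves at round t her score at round t is already
   nonnegative, so she stays classified +1 and never moves again. *)

Section Dotp.
Variables (R : realType) (l : nat).
Implicit Types u v : 'rV[R]_l.

Lemma dotp0r u : dotp u 0 = 0.
Proof. by rewrite /dotp big1 // => k _; rewrite mxE mulr0. Qed.

Lemma dotpDr u v v' : dotp u (v + v') = dotp u v + dotp u v'.
Proof. by rewrite /dotp -big_split; apply: eq_bigr => k _; rewrite mxE mulrDr. Qed.

Lemma dotpZr u a v : dotp u (a *: v) = a * dotp u v.
Proof. by rewrite /dotp mulr_sumr; apply: eq_bigr => k _; rewrite mxE mulrCA. Qed.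

End Dotp.

Section Score.
Variables (R : realType) (n l : nat) (theta : 'rV[R]_l) (b : R)
  (w : 'I_n -> 'I_n -> R).
Hypothesis w_ge0 : forall j i : 'I_n, 0 <= w j i.
Implicit Types (Y : 'I_n -> 'rV[R]_l) (i j : 'I_n).

Definition proj Y j := dotp theta (Y j).
Definition score Y i := dotp theta (embed w Y i) + b.

Lemma scoreE Y i :
  score Y i = w i i * proj Y i + \sum_(j < n | j != i) w j i * proj Y j + b.
Proof.
rewrite /score /embed dotpDr dotpZr (big_morph _ (dotpDr theta) (dotp0r theta)).
by congr (_ + _ + _); apply: eq_bigr => j _; rewrite dotpZr.
Qed.

Lemma score_homo Y Y' i :
  (forall j, proj Y j <= proj Y' j) -> score Y i <= score Y' i.
Proof.
move=> le_proj; rewrite !scoreE lerD2r lerD ?ler_wpM2l //.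
by apply: ler_sum => j _; rewrite ler_wpM2l.
Qed.

Lemma h_eq1 Y i : (h theta b w Y i = 1) <-> 0 <= score Y i.
Proof.
rewrite /h -/(score Y i); split; last by move->.
by case: ifP => // _; lra.
Qed.

Lemma h_eqN1 Y i : (h theta b w Y i = -1) <-> score Y i < 0.
Proof.
rewrite /h -/(score Y i) ltNge; split; last by move/negbTE->.
by case: ifP => // _; lra.
Qed.

Lemma proj_upd Y i p j : proj (upd Y i p) j = if j == i then dotp theta p else proj Y j.
Proof. by rewrite /proj /upd; case: eqP. Qed.

Lemma score_updE Y i p :
  score (upd Y i p) i = score Y i + w i i * (dotp theta p - proj Y i).
Proof.
rewrite !scoreE proj_upd eqxx.
under eq_bigr => j /negbTE ji do rewrite proj_upd ji.
rewrite mulrBr; lra.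
Qed.

Lemma br_step_moved Y Y' i : br_step theta b w Y Y' -> Y' i <> Y i ->
  score Y i < 0 /\ 0 <= score (upd Y i (Y' i)) i.
Proof.
move=> /(_ i) /= [move_spec stay_spec] moved.
have [can_move|] := classic (h theta b w Y i = -1 /\
  exists x', h theta b w (upd Y i x') i = 1 /\ cost (Y i) x' <= 2).
  have [[/h_eqN1 neg _] [/h_eq1 pos _]] := (can_move, move_spec can_move).
  by split.
by move/stay_spec.
Qed.

Lemma br_step_proj_homo Y Y' j : br_step theta b w Y Y' -> proj Y j <= proj Y' j.
Proof.
move=> step; have [stay|/eqP moved] := eqVneq (Y' j) (Y j); first by rewrite /proj stay.
have [neg pos] := br_step_moved step moved.
rewrite score_updE in pos.
have gain_gt0 : 0 < w j j * (dotp theta (Y' j) - proj Y j) by lra.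
rewrite -subr_ge0; apply: contraTT gain_gt0; rewrite -ltNge -leNgt => lt0.
exact: mulr_ge0_le0 (w_ge0 j j) (ltW lt0).
Qed.

End Score.

Section Dynamics.
Variables (R : realType) (n l : nat) (theta : 'rV[R]_l) (b : R)
  (w : 'I_n -> 'I_n -> R) (X : nat -> 'I_n -> 'rV[R]_l).
Hypothesis w_ge0 : forall j i : 'I_n, 0 <= w j i.
Hypothesis X_step : forall t : nat, br_step theta b w (X t) (X t.+1).

Lemma score_nondecreasing i s t :
  (s <= t)%N -> score theta b w (X s) i <= score theta b w (X t) i.
Proof.
move: s t; apply: (nondecnP (f := fun t => score theta b w (X t) i)) => t.
apply: score_homo => // j.
exact: br_step_proj_homo (X_step t).
Qed.

Lemma score_ge0_after_move t i : X t.+1 i <> X t i -> 0 <= score theta b w (X t.+1) i.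
Proof.
move=> moved; have [_ pos] := br_step_moved (X_step t) moved.
apply: le_trans pos _; apply: score_homo => // j.
rewrite proj_upd; case: eqP => [->|_]; first exact: lexx.
exact: br_step_proj_homo (X_step t).
Qed.

Lemma no_move_after_move s t i : (s < t)%N -> X s.+1 i <> X s i -> X t.+1 i = X t i.
Proof.
move=> lt_st moved_s; apply: NNPP => moved_t.
have [neg _] := br_step_moved (X_step t) moved_t.
have := le_trans (score_ge0_after_move moved_s) (score_nondecreasing i lt_st).
by rewrite leNgt neg.
Qed.

End Dynamics.

Theorem proposition1 (R : realType) (n l : nat)
  (x : 'I_n -> 'rV[R]_l) (w : 'I_n -> 'I_n -> R)
  (theta : 'rV[R]_l) (b : R)
  (hw : forall j i : 'I_n, 0 <= w j i)
  (X : nat -> 'I_n -> 'rV[R]_l)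
  (hX0 : X 0%N = x)
  (hstep : forall t : nat, br_step theta b w (X t) (X t.+1)) :
  forall (i : 'I_n) (t1 t2 : nat), (1 <= t1)%N -> (1 <= t2)%N ->
    X t1 i <> X t1.-1 i -> X t2 i <> X t2.-1 i -> t1 = t2.
Proof.
move=> i [|s] [|t] // _ _ /= moved_s moved_t.
have [lt_st|lt_ts|-> //] := ltngtP s t.
- by have := no_move_after_move hw hstep lt_st moved_s.
- by have := no_move_after_move hw hstep lt_ts moved_t.
Qed.
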